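(* Let $m$ be a positive integer and suppose that infinitely many of the boards $G_{m,n}$ ($n\ge 1$) have outcome class $V$. Then there exists a nonnegative integer $k<2m$ such that for every nonnegative integer $i$, the board $G_{m,k+2mi}$ has outcome class $V$.
   Context: Domineering is a two-player game played on a rectangular grid of unit squares. The players alternate placing dominoes, each covering two adjacent unoccupied squares; the player Vertical must place dominoes vertically (covering two squares in the same column), and the player Horizontal must place them horizontally (covering two squares in the same row). A player with no legal move on her turn loses. $G_{m,n}$ denotes the empty board with vertical dimension $m$ (number of rows) and horizontal dimension $n$ (number of columns). Every position has one of four outcome classes under optimal play: $V$ (Vertical wins whoever moves first), $H$ (Horizontal wins whoever moves first), $1$ (the player who moves first wins), $2$ (the player who moves second wins). *)

From mathcomp Require Import all_boot.
Set Implicit Arguments. Unset Strict Implicit. Unset Printing Implicit Defensive.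

(* A cell is (row, column) with row < m, column < n. A position is the set of
   occupied cells. *)
Definition cell (m n : nat) := ('I_m * 'I_n)%type.
Definition position (m n : nat) := {set cell m n}.

Definition Vertical : bool := true.
Definition Horizontal : bool := false.

Definition domino {m n} (p : bool) (x y : cell m n) : bool :=
  if p then (nat_of_ord x.2 == nat_of_ord y.2) && (nat_of_ord y.1 == (nat_of_ord x.1).+1)
  else (nat_of_ord x.1 == nat_of_ord y.1) && (nat_of_ord y.2 == (nat_of_ord x.2).+1).

Definition move {m n} (p : bool) (P Q : position m n) : bool :=
  [exists x : cell m n, exists y : cell m n,
     [&& domino p x y, x \notin P, y \notin P & Q == P :|: [set x; y]]].

Fixpoint wins_fuel {m n} (f : nat) (p : bool) (P : position m n) : bool :=
  match f with
  | 0 => false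
  | f'.+1 => [exists Q : position m n, move p P Q && ~~ wins_fuel f' (~~ p) Q]
  end.

(* Every move occupies two free cells, so a game from P lasts at most
   #|~: P| moves; depth #|~: P|.+1 is therefore sufficient and exact. *)
Definition wins {m n} (p : bool) (P : position m n) : bool :=
  wins_fuel (#|~: P|).+1 p P.

Inductive outcome := OutV | OutH | Out1 | Out2.

Definition outcome_of {m n} (P : position m n) : outcome :=
  match wins Vertical P, wins Horizontal P with
  | true, false => OutV
  | false, true => OutH
  | true, true => Out1     (* first player wins *)
  | false, false => Out2   (* second player wins *)
  end.

Definition G_outcome (m n : nat) : outcome := outcome_of (set0 : position m n).

(* Split G_{m,a+2m} into G_{m,a} and two m x m squares on its right, and
   transpose each square onto the other.  This mirror turns every vertical
   domino in the squares into a horizontal one, so Horizontal can answer any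
   vertical move there by its mirror image while playing the left part G_{m,a}
   as she would on G_{m,a} alone.  Hence if Vertical cannot win G_{m,a} moving
   first, she cannot win G_{m,a+2m} either, and if Horizontal wins G_{m,a}
   moving first, she also wins G_{m,a+2m}: an outcome V on G_{m,a+2m} forces
   V on G_{m,a}.  The V-boards are thus closed under removing 2m columns, and
   infinitely many of them fill a whole residue class modulo 2m. *)

From mathcomp Require Import all_boot.
From mathcomp Require Import zify.
From Stdlib Require Import Classical.
Set Implicit Arguments. Unset Strict Implicit.

Section Games.
Variables m n : nat.
Implicit Types (p : bool) (P Q R : position m n).

Lemma move_of_domino p P (x y : cell m n) :
  domino p x y -> x \notin P -> y \notin P -> move p P (P :|: [set x; y]).
Proof.
by move=> dxy xP yP; apply/existsP; exists x; apply/existsP; exists y; rewrite dxy xP yP eqxx.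
Qed.

Lemma move_card_compl p P Q : move p P Q -> #|~: Q| < #|~: P|.
Proof.
case/existsP=> x /existsP [y /and4P [_ xP _ /eqP ->]].
apply: proper_card; rewrite properE setCU subsetIl /=.
by apply/subsetPn; exists x; rewrite !inE ?eqxx // andbF.
Qed.

Lemma wins_fuel_enough f g p P :
  #|~: P| < f -> #|~: P| < g -> wins_fuel f p P = wins_fuel g p P.
Proof.
elim: f g p P => [|f IHf] [|g] p P //= ltf ltg.
apply: eq_existsb => Q; case mPQ: (move p P Q) => //=.
have ltQP := move_card_compl mPQ.
by rewrite (IHf g) // (leq_trans ltQP).
Qed.

Lemma winsE p P : wins p P = [exists Q, move p P Q && ~~ wins (~~ p) Q].
Proof.
rewrite /wins /=; apply: eq_existsb => Q; case mPQ: (move p P Q) => //=.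
by rewrite (@wins_fuel_enough _ (#|~: Q|).+1) // (move_card_compl mPQ).
Qed.

Lemma winsN_of_reply p (Inv : position m n -> Prop) :
  (forall P Q, Inv P -> move p P Q -> exists R, move (~~ p) Q R /\ Inv R) ->
  forall P, Inv P -> ~~ wins p P.
Proof.
move=> reply P; move: {2}#|~: P| (leqnn #|~: P|) => k.
elim: k P => [|k IHk] P le_Pk InvP; rewrite winsE; apply/existsP => -[Q /andP [mPQ]].
  by have := move_card_compl mPQ; lia.
have [R [mQR InvR]] := reply _ _ InvP mPQ.
apply/negP/negPn; rewrite winsE negbK; apply/existsP; exists R; rewrite mQR IHk //.
by have := move_card_compl mPQ; have := move_card_compl mQR; lia.
Qed.

End Games.

Lemma cell_eq (m n : nat) (u v : cell m n) :
  u.1 = v.1 :> nat -> u.2 = v.2 :> nat -> u = v.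
Proof. by case: u v => [? ?] [? ?] /= /val_inj -> /val_inj ->. Qed.

Section Mirror.
Variables m a : nat.
Local Notation N := (a + 2 * m).
Implicit Types (P Q R : position m N) (u v x y : cell m N).

(* The cells (r, a + c) and (c, a + m + r), for r, c < m, are exchanged;
   cells in the first a columns are fixed. *)
Definition mirror_row u : nat := if u.2 < a + m then u.2 - a else u.2 - a - m.
Definition mirror_col u : nat := if u.2 < a + m then a + m + u.1 else a + u.1.

Lemma mirror_row_lt u : mirror_row u < m.
Proof.
by rewrite /mirror_row; have := ltn_ord u.1; have := ltn_ord u.2; case: ifP; lia.
Qed.

Lemma mirror_col_lt u : mirror_col u < N.
Proof. by rewrite /mirror_col; have := ltn_ord u.1; case: ifP; lia. Qed.

Definition mirror u : cell m N :=
  if a <= u.2 then (Ordinal (mirror_row_lt u), Ordinal (mirror_col_lt u)) else u.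

Lemma mirror_left u : u.2 < a -> mirror u = u.
Proof. by move=> lt_ua; rewrite /mirror leqNgt lt_ua. Qed.

Lemma mirror_rightE u : a <= u.2 ->
  (mirror u).1 = mirror_row u :> nat /\ (mirror u).2 = mirror_col u :> nat.
Proof. by move=> le_au; rewrite /mirror le_au. Qed.

Lemma mirror_right u : a <= u.2 -> a <= (mirror u).2.
Proof. by case/mirror_rightE=> _ ->; rewrite /mirror_col; case: ifP; lia. Qed.

Lemma mirror_square u : a <= u.2 -> ((mirror u).2 < a + m) = ~~ (u.2 < a + m).
Proof.
case/mirror_rightE=> _ ->; rewrite /mirror_col; have := ltn_ord u.1.
by case: ifP => _ ?; apply/idP/idP; lia.
Qed.

Lemma mirrorK : involutive mirror.
Proof.
move=> u; case: (ltnP u.2 a) => [lt_ua | le_au]; first by rewrite !mirror_left.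
have [row1 col1] := mirror_rightE le_au.
have [row2 col2] := mirror_rightE (mirror_right le_au).
apply: cell_eq; rewrite ?row2 ?col2 /mirror_row /mirror_col ?row1 ?col1;
  rewrite /mirror_row /mirror_col; have := ltn_ord u.1; have := ltn_ord u.2;
  by case: ifP; case: ifP; lia.
Qed.

Lemma mirror_domino x y : a <= x.2 ->
  domino Vertical x y -> domino Horizontal (mirror x) (mirror y).
Proof.
move=> le_ax /andP [/eqP eq_xy2 /eqP eq_y1]; have le_ay : a <= y.2 by rewrite -eq_xy2.
have [rowx colx] := mirror_rightE le_ax; have [rowy coly] := mirror_rightE le_ay.
rewrite /domino /= rowx colx rowy coly /mirror_row /mirror_col -eq_xy2 eq_y1.
by case: ifP => _; apply/andP; split; apply/eqP; lia.
Qed.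

Lemma mirror_eqF u v : a <= u.2 -> u.2 = v.2 :> nat -> (mirror u == v) = false.
Proof.
move=> le_au eq_uv2; apply/negbTE/eqP => mu_v.
by have := mirror_square le_au; rewrite mu_v -eq_uv2; case: (_ < _).
Qed.

Definition emb (z : cell m a) : cell m N := (z.1, widen_ord (leq_addr _ _) z.2).

Definition res P : position m a := [set z | emb z \in P].

Definition mirror_closed P := forall u, (mirror u \in P) = (u \in P).

Lemma emb_inj : injective emb.
Proof. by move=> [? ?] [? ?] [-> /val_inj ->]. Qed.

Lemma mirror_emb z : mirror (emb z) = emb z.
Proof. by rewrite mirror_left //= ltn_ord. Qed.

Lemma embP u : u.2 < a -> exists z, u = emb z.
Proof. by move=> lt_ua; exists (u.1, Ordinal lt_ua); apply: cell_eq. Qed.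

Lemma res0 : res set0 = set0.
Proof. by apply/setP=> z; rewrite !inE. Qed.

Lemma res_setU_emb P (x y : cell m a) :
  res (P :|: [set emb x; emb y]) = res P :|: [set x; y].
Proof. by apply/setP=> z; rewrite !inE !(inj_eq emb_inj). Qed.

Lemma res_setU_right P x y :
  a <= x.2 -> a <= y.2 -> res (P :|: [set x; y]) = res P.
Proof.
move=> le_ax le_ay; apply/setP=> z; rewrite !inE.
have neq_emb v : a <= v.2 -> (emb z == v) = false.
  by move=> le_av; apply/negbTE/eqP=> ez; move: le_av; rewrite -ez leqNgt /= ltn_ord.
by rewrite !neq_emb ?orbF.
Qed.

Lemma mirror_closed0 : mirror_closed set0.
Proof. by move=> u; rewrite !inE. Qed.

Lemma mirror_closedU P Q :
  mirror_closed P -> mirror_closed Q -> mirror_closed (P :|: Q).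
Proof. by move=> cP cQ u; rewrite !inE cP cQ. Qed.

Lemma mirror_closed_emb (x y : cell m a) : mirror_closed [set emb x; emb y].
Proof.
by move=> u; rewrite !inE -{1}(mirror_emb x) -{1}(mirror_emb y) !(inj_eq (can_inj mirrorK)).
Qed.

Lemma mirror_closed_pairs x y :
  mirror_closed ([set x; y] :|: [set mirror x; mirror y]).
Proof. by move=> u; rewrite !inE !(inj_eq (can_inj mirrorK)) !(inv_eq mirrorK) orbC. Qed.

Lemma move_lift p Q (R' : position m a) :
  mirror_closed Q -> move p (res Q) R' ->
  exists R, [/\ move p Q R, mirror_closed R & res R = R'].
Proof.
move=> cQ /existsP [x /existsP [y /and4P [dxy]]]; rewrite !inE => xQ yQ /eqP ->.
exists (Q :|: [set emb x; emb y]); split.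
- exact: move_of_domino.
- exact: mirror_closedU cQ (mirror_closed_emb x y).
- exact: res_setU_emb.
Qed.

Lemma mirror_reply P x y : mirror_closed P -> a <= x.2 -> domino Vertical x y ->
  x \notin P -> y \notin P ->
  [/\ move Horizontal (P :|: [set x; y]) (P :|: [set x; y] :|: [set mirror x; mirror y]),
      mirror_closed (P :|: [set x; y] :|: [set mirror x; mirror y])
    & res (P :|: [set x; y] :|: [set mirror x; mirror y]) = res P].
Proof.
move=> cP le_ax dxy xP yP; have /andP [/eqP eq_xy2 _] := dxy.
have le_ay : a <= y.2 by rewrite -eq_xy2.
split.
- apply: move_of_domino; first exact: mirror_domino.
  + by rewrite !inE cP (negbTE xP) !mirror_eqF.
  + by rewrite !inE cP (negbTE yP) !mirror_eqF.
- by rewrite -setUA; apply: mirror_closedU cP (mirror_closed_pairs x y).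
- by rewrite !res_setU_right ?mirror_right.
Qed.

Definition mirror_invariant P := mirror_closed P /\ ~~ wins Vertical (res P).

Lemma horizontal_reply P Q : mirror_invariant P -> move Vertical P Q ->
  exists R, move Horizontal Q R /\ mirror_invariant R.
Proof.
move=> [cP lostP] /existsP [x /existsP [y /and4P [dxy xP yP /eqP ->]]].
case: (ltnP x.2 a) => [lt_xa | le_ax]; last first.
  have [mQR cR resR] := mirror_reply cP le_ax dxy xP yP.
  by exists (P :|: [set x; y] :|: [set mirror x; mirror y]); rewrite /mirror_invariant resR.
have /andP [/eqP eq_xy2 _] := dxy.
have [zx ?] := embP lt_xa.
have [zy ?] : exists zy, y = emb zy by apply: embP; rewrite -eq_xy2.
subst x y; set Q' := res P :|: [set zx; zy].
have mPQ' : move Vertical (res P) Q' by apply: move_of_domino; rewrite ?inE.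
have : wins Horizontal Q'.
  by move: lostP; rewrite winsE negb_exists => /forallP /(_ Q'); rewrite mPQ' negbK.
rewrite winsE => /existsP [R' /andP [mR' lostR']].
rewrite /Q' -res_setU_emb in mR'.
have [R [mQR cR resR]] := move_lift (mirror_closedU cP (mirror_closed_emb zx zy)) mR'.
by exists R; split; last split; rewrite // resR.
Qed.

Lemma winsV_res P : mirror_closed P -> ~~ wins Vertical (res P) -> ~~ wins Vertical P.
Proof. by move=> cP lostP; apply: (winsN_of_reply horizontal_reply). Qed.

Lemma winsH_res P : mirror_closed P -> wins Horizontal (res P) -> wins Horizontal P.
Proof.
move=> cP; rewrite !winsE => /existsP [R' /andP [mR' lostR']].
have [R [mPR cR resR]] := move_lift cP mR'.
by apply/existsP; exists R; rewrite mPR winsV_res ?resR.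
Qed.

End Mirror.

Lemma G_outcomeV m n : G_outcome m n = OutV <->
  wins Vertical (set0 : position m n) && ~~ wins Horizontal (set0 : position m n).
Proof. by rewrite /G_outcome /outcome_of; do 2!case: wins; split. Qed.

Lemma G_outcomeV_sub m a : G_outcome m (a + 2 * m) = OutV -> G_outcome m a = OutV.
Proof.
rewrite !G_outcomeV -(res0 m a) => /andP [winV lostH]; apply/andP; split.
- by apply: contraLR winV; apply: winsV_res (@mirror_closed0 m a).
- by apply: contraNN lostH; apply: winsH_res (@mirror_closed0 m a).
Qed.

Section Residues.
Variables (d : nat) (P : nat -> Prop).
Hypothesis P_sub : forall n, P (n + d) -> P n.

Lemma P_sub_mul n j : P (n + d * j) -> P n.
Proof.
elim: j n => [|j IHj] n; first by rewrite muln0 addn0.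
by rewrite mulnS addnCA addnC => /P_sub /IHj.
Qed.

Lemma notP_class_mono k i i' : i <= i' -> ~ P (k + d * i) -> ~ P (k + d * i').
Proof.
move=> le_ii' notP Pi'; apply: notP; apply: (@P_sub_mul _ (i' - i)).
by rewrite -addnA -mulnDr subnKC.
Qed.

Lemma notP_classes_uniform t :
  (forall k, k < t -> exists i, ~ P (k + d * i)) ->
  exists M, forall k, k < t -> ~ P (k + d * M).
Proof.
elim: t => [|t IHt] notP; first by exists 0.
have [M notPM] := IHt (fun k lt_kt => notP k (ltnW lt_kt)).
have [i notPi] := notP t (ltnSn t).
exists (maxn M i) => k; rewrite ltnS leq_eqVlt => /orP [/eqP -> | lt_kt].
- exact: notP_class_mono (leq_maxr M i) notPi.
- exact: notP_class_mono (leq_maxl M i) (notPM k lt_kt).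
Qed.

Lemma exists_residue_class_all :
  0 < d -> (forall N, exists n, N <= n /\ P n) ->
  exists k, k < d /\ forall i, P (k + d * i).
Proof.
move=> d_gt0 P_inf; apply: NNPP => noClass.
have [M notPM] : exists M, forall k, k < d -> ~ P (k + d * M).
  apply: notP_classes_uniform => k lt_kd; apply: not_all_ex_not => Pk.
  by apply: noClass; exists k.
have [n [le_Mn Pn]] := P_inf (M * d).
apply: (notP_class_mono (_ : M <= n %/ d) (notPM _ (ltn_pmod n d_gt0))).
  by rewrite leq_divRL.
by rewrite mulnC addnC -divn_eq.
Qed.

End Residues.

Theorem lemma3p4 (m : nat) (hm : 0 < m)
  (hinf : forall N : nat, exists n : nat, [/\ N <= n, 0 < n & G_outcome m n = OutV]) :
  exists k : nat, k < 2 * m /\ forall i : nat, G_outcome m (k + 2 * m * i) = OutV.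
Proof.
apply: (exists_residue_class_all (@G_outcomeV_sub m)); first by rewrite muln_gt0.
by move=> N; have [n [le_Nn _ Vn]] := hinf N; exists n.
Qed.
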